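(* Let $G$ be a finite simple graph on $[d]$ and let $I\in\{\langle [I_G]_2\rangle, J_G, L_G\}$. If $\mathcal{G}$ is the reduced Gröbner basis of $I$ with respect to a reverse lexicographic order on $R[G]$ such that $x_S\ge x_\emptyset$ for every $S\in S(G)$, then $\{\, g/x_\emptyset^{k} : g\in\mathcal{G},\ k\in\mathbb{Z}_{\ge0},\ x_\emptyset^k \text{ divides } g,\ x_\emptyset^{k+1}\text{ does not divide } g\,\}$ is a Gröbner basis of $I_G$.
   Context: A stable set of $G$ is a subset of $[d]$ with no edge of $G$ (including $\emptyset$ and singletons); $S(G)$ is the set of stable sets; $R[G]=\mathbb{K}[x_S : S\in S(G)]$ over a field $\mathbb{K}$, all variables of degree $1$. $I_G$ is the kernel of $\pi:R[G]\to\mathbb{K}[t_1,\dots,t_d,s]$, $\pi(x_S)=s\prod_{j\in S}t_j$. $\langle [I_G]_2\rangle$ is the ideal generated by the degree-$2$ homogeneous elements of $I_G$. $J_G$ is the ideal generated by all $x_{S_1}x_{S_2}-x_{S_3}x_{S_4}$ with $S_i\in S(G)$, $S_1\cap S_2=S_3\cap S_4=\emptyset$, $S_1\cup S_2=S_3\cup S_4$. $L_G=\langle x_{S\setminus\{i\}}x_{\{i\}}-x_Sx_\emptyset : i\in S\in S(G),\ |S|\ge2\rangle$. The (graded) reverse lexicographic order induced by an ordering $y_1>\dots>y_n$ of the variables: $u<v$ if $\deg u<\deg v$, or degrees are equal and the rightmost nonzero entry of the exponent vector of $v$ minus that of $u$ is negative. A Gröbner basis of $I$ w.r.t. $<$ is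 a finite subset of $I$ whose leading monomials generate ${\rm in}_<(I)$; it is reduced if all leading coefficients are $1$ and no monomial of any element lies in the ideal generated by the leading monomials of the other elements. *)

From HB Require Import structures.
From mathcomp Require Import all_boot all_order all_algebra all_fingroup.
From mathcomp Require Import mpoly.
Set Implicit Arguments. Unset Strict Implicit. Unset Printing Implicit Defensive.
Import GRing.Theory.
Local Open Scope ring_scope.

Section Generic.
Variables (K : fieldType) (n : nat).
Local Notation P := {mpoly K[n]}.

Definition ideal_gen (A : P -> Prop) : P -> Prop :=
  fun p => exists s : seq (P * P),
    (forall x, x \in s -> A x.2) /\ p = \sum_(x <- s) x.1 * x.2.

Definition mdivides (a b : P) : Prop := exists q : P, b = a * q.

(* Graded reverse lexicographic order induced by the ordering of the variables
   y_1 > y_2 > ... > y_n, where y_(k+1) is the variable with index  y k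
   (y : {perm 'I_n}; position k = 0 is the largest variable).
   revlex_lt y u v  means  u < v. *)
Definition revlex_lt (y : {perm 'I_n}) (u v : 'X_{1..n}) : bool :=
  (mdeg u < mdeg v)%N ||
  ((mdeg u == mdeg v) &&
   [exists k : 'I_n,
      (v (y k) < u (y k))%N &&
      [forall l : 'I_n, (k < l)%N ==> (v (y l) == u (y l))]]).

Definition is_lm (y : {perm 'I_n}) (p : P) (m : 'X_{1..n}) : Prop :=
  m \in msupp p /\ (forall m', m' \in msupp p -> m' != m -> revlex_lt y m' m).

Definition LMs (y : {perm 'I_n}) (A : P -> Prop) : P -> Prop :=
  fun q => exists p m, A p /\ is_lm y p m /\ q = 'X_[m].

Definition init_ideal (y : {perm 'I_n}) (I : P -> Prop) : P -> Prop :=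
  ideal_gen (LMs y I).

Definition groebner_basis (y : {perm 'I_n}) (I Gs : P -> Prop) : Prop :=
  (exists s : seq P, forall p, Gs p <-> p \in s) /\
  (forall g, Gs g -> I g) /\
  (forall q, ideal_gen (LMs y Gs) q <-> init_ideal y I q).

Definition reduced_groebner_basis (y : {perm 'I_n}) (I Gs : P -> Prop) : Prop :=
  groebner_basis y I Gs /\
  (forall g, Gs g -> exists m, is_lm y g m /\ g@_m = 1) /\
  (forall g, Gs g -> forall m, m \in msupp g ->
     ~ ideal_gen (LMs y (fun h => Gs h /\ h <> g)) 'X_[m]).

End Generic.

Section Graph.
Variables (K : fieldType) (d : nat) (E : rel 'I_d).

Definition stable (S : {set 'I_d}) : bool :=
  [forall i in S, forall j in S, ~~ E i j].

Definition stabT := {S : {set 'I_d} | stable S}.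
Definition nS : nat := #|{: stabT}|.

Lemma stable_set0 : stable set0.
Proof. by apply/forallP => i; rewrite inE. Qed.

Definition stab_empty : stabT := exist _ set0 stable_set0.

Definition RG := {mpoly K[nS]}.
Definition xS (S : stabT) : RG := 'X_(enum_rank S).

(* pi : R[G] -> K[t_1,...,t_d,s],  t_j = 'X_(widen j), s = 'X_(ord_max) *)
Definition pi_img (S : stabT) : {mpoly K[d.+1]} :=
  'X_(@ord_max d) * \prod_(j in val S) 'X_(widen_ord (leqnSn d) j).
Definition pi_map (p : RG) : {mpoly K[d.+1]} :=
  mmap (fun c : K => c%:MP) (fun i : 'I_nS => pi_img (enum_val i)) p.

Definition I_G : RG -> Prop := fun p => pi_map p = 0.

Definition I_G2 : RG -> Prop :=
  ideal_gen (fun p => I_G p /\ all (fun m => mdeg m == 2%N) (msupp p)).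

Definition J_G : RG -> Prop :=
  ideal_gen (fun q => exists S1 S2 S3 S4 : stabT,
    [/\ val S1 :&: val S2 = set0, val S3 :&: val S4 = set0,
        val S1 :|: val S2 = val S3 :|: val S4 &
        q = xS S1 * xS S2 - xS S3 * xS S4]).

Definition L_G : RG -> Prop :=
  ideal_gen (fun q => exists (S S' Si : stabT) (i : 'I_d),
    [/\ i \in val S, (2 <= #|val S|)%N, val S' = val S :\ i,
        val Si = [set i] &
        q = xS S' * xS Si - xS S * xS stab_empty]).

End Graph.

Arguments stable {d} E S.
Arguments stabT {d} E.
Arguments nS {d} E.
Arguments stab_empty {d} E.
Arguments RG K {d} E.
Arguments xS K {d} E S.
Arguments pi_img K {d} E S.
Arguments pi_map K {d} E p.
Arguments I_G K {d} E p.
Arguments I_G2 K {d} E p.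
Arguments J_G K {d} E p.
Arguments L_G K {d} E p.

(* Each of the three ideals I is generated by homogeneous quadratic binomials,
   lies in I_G and contains L_G, so its reduced Groebner basis consists of
   homogeneous polynomials.  Modulo L_G one has
   x_0^|S| x_S = x_0 prod_(j in S) x_{j}, so multiplying by a power of x_0
   brings every monomial to a normal form that only depends on its image under
   pi; hence x_0^N f lies in L_G, and so in I, for every f in I_G and N large.
   Conversely x_0^k h in I_G forces h in I_G, pi being a map into a domain
   sending x_0 to a monomial.  Now let m be the leading monomial of f in I_G:
   the leading monomial of some g in the basis divides x_0^N m.  Write
   g = x_0^k h with x_0 not dividing h.  As x_0 is the smallest variable of
   the reverse lexicographic order, a homogeneous polynomial whose leading
   monomial contains x_0 is divisible by x_0; so lm(h) = lm(g) / x_0^k is free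
   of x_0 and divides m. *)

From HB Require Import structures.
From mathcomp Require Import all_boot all_order all_algebra all_fingroup.
From mathcomp Require Import mpoly.
From mathcomp Require Import ring.
From Stdlib Require Import Classical.
Set Implicit Arguments. Unset Strict Implicit. Unset Printing Implicit Defensive.
Import GRing.Theory.
Local Open Scope ring_scope.

Section Monomials.
Variables (K : fieldType) (n : nat).
Local Notation P := {mpoly K[n]}.
Implicit Types (p : P) (u w m : 'X_{1..n}).

Lemma mnm_ind (Q : 'X_{1..n} -> Prop) :
  Q 0%MM -> (forall i b, Q b -> Q (U_(i) + b)%MM) -> forall a, Q a.
Proof.
move=> Q0 QU a; have [c] := ubnP (mdeg a); elim: c a => // c IHc a.
have [-> // | a0] := eqVneq a 0%MM; rewrite ltnS => ac.
have [i ai] : exists i, a i != 0%N.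
  apply/existsP; apply: contraR a0 => /existsPn a0; apply/eqP/mnmP => i.
  by rewrite mnm0E; apply/eqP; rewrite -[_ == _]negbK a0.
have Uia : (U_(i) <= a)%MM by rewrite lep1mP.
rewrite -(submK Uia) addmC; apply/QU/IHc.
by move: ac; rewrite -{1}(submK Uia) mdegD mdeg1 addn1.
Qed.

Lemma mcoeffXM p u m :
  ('X_[u] * p)@_m = if (u <= m)%MM then p@_(m - u)%MM else 0.
Proof.
rewrite mulrC; case: ifP => [um | um]; first by rewrite -{1}(submK um) addmC mcoeffMX.
apply/eqP; rewrite mcoeff_eq0 (perm_mem (msuppMX p u)).
by apply/mapP => -[m' _ mE]; rewrite mE lem_addr in um.
Qed.

Lemma msuppXM p u m :
  (m \in msupp ('X_[u] * p)) = (u <= m)%MM && ((m - u)%MM \in msupp p).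
Proof. by rewrite !mcoeff_msupp mcoeffXM; case: ifP; rewrite ?eqxx. Qed.

Lemma mpolyX_neq0 m : 'X_[m] != 0 :> P.
Proof. by rewrite -msupp_eq0 msuppX. Qed.

Lemma mdividesX p w : (forall m, m \in msupp p -> (w <= m)%MM) -> mdivides 'X_[w] p.
Proof.
move=> wp; exists (\sum_(m <- msupp p) p@_m *: 'X_[m - w]).
rewrite mulr_sumr {1}(mpolyE p) !big_seq; apply: eq_bigr => m pm.
by rewrite -scalerAr -mpolyXD addmC submK ?wp.
Qed.

Lemma dhomogXMK d u p : 'X_[u] * p \is d.-homog -> p \is (d - mdeg u).-homog.
Proof.
move=> /dhomogP uph; apply/dhomogP => m pm.
have: (u + m)%MM \in msupp ('X_[u] * p) by rewrite msuppXM lem_addr addmC addmK.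
by move/uph => <-; rewrite mfD addKn.
Qed.

End Monomials.

Lemma sum_mcoeffZ_comp_eq0 (K : fieldType) (n n' : nat) (f : {mpoly K[n]})
    (mu : 'X_{1..n} -> 'X_{1..n'}) (V : lmodType K) (F : 'X_{1..n'} -> V) :
  \sum_(a <- msupp f) f@_a *: ('X_[mu a] : {mpoly K[n']}) = 0 ->
  \sum_(a <- msupp f) f@_a *: F (mu a) = 0.
Proof.
move=> rel0; pose r := undup [seq mu a | a <- msupp f].
have FE a : a \in msupp f -> F (mu a) = \sum_(v <- r) (mu a == v)%:R *: F v.
  move=> fa; rewrite (bigD1_seq (mu a)) ?undup_uniq ?mem_undup ?map_f //= eqxx scale1r.
  by rewrite big1 ?addr0 // => v /negbTE; rewrite eq_sym => ->; rewrite scale0r.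
rewrite big_seq; under eq_bigr => a fa do rewrite (FE a fa) scaler_sumr.
rewrite -big_seq exchange_big big1 //= => v _.
under eq_bigr do rewrite scalerA; rewrite -scaler_suml.
suff -> : \sum_(a <- msupp f) f@_a * (mu a == v)%:R = 0 by rewrite scale0r.
have /(congr1 (mcoeff v)) := rel0; rewrite raddf_sum mcoeff0 /=; apply: etrans.
by apply: eq_bigr => a _; rewrite mcoeffZ mcoeffX.
Qed.

Section IdealGen.
Variables (K : fieldType) (n : nat).
Local Notation P := {mpoly K[n]}.
Implicit Types (A B : P -> Prop) (p q r : P).

Lemma ideal_gen_ind A (Q : P -> Prop) :
  Q 0 -> (forall p q, Q p -> Q q -> Q (p + q)) ->
  (forall r p, A p -> Q (r * p)) -> forall p, ideal_gen A p -> Q p.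
Proof.
move=> Q0 QD QM p [s [As ->]]; elim: s As => [|x s IHs] As; first by rewrite big_nil.
rewrite big_cons; apply: QD; first by apply/QM/As; rewrite mem_head.
by apply: IHs => z zs; apply: As; rewrite inE zs orbT.
Qed.

Lemma ideal_gen0 A : ideal_gen A 0.
Proof. by exists [::]; rewrite big_nil. Qed.

Lemma ideal_genD A p q : ideal_gen A p -> ideal_gen A q -> ideal_gen A (p + q).
Proof.
move=> [s1 [As1 ->]] [s2 [As2 ->]]; exists (s1 ++ s2); rewrite big_cat.
by split=> // x; rewrite mem_cat => /orP[/As1|/As2].
Qed.

Lemma ideal_genMl A r p : ideal_gen A p -> ideal_gen A (r * p).
Proof.
move=> [s [As ->]]; exists [seq (r * x.1, x.2) | x <- s]; split.
  by move=> x /mapP[z zs ->] /=; apply: As.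
by rewrite big_map mulr_sumr; apply: eq_bigr => x _; rewrite mulrA.
Qed.

Lemma ideal_gen_gen A p : A p -> ideal_gen A p.
Proof.
by move=> Ap; exists [:: (1, p)]; rewrite big_seq1 mul1r; split=> // x /[!inE] /eqP->.
Qed.

Lemma ideal_genB A p q : ideal_gen A p -> ideal_gen A q -> ideal_gen A (p - q).
Proof. by move=> Ip Iq; rewrite -mulN1r; apply/ideal_genD/ideal_genMl. Qed.

Lemma ideal_genZ A c p : ideal_gen A p -> ideal_gen A (c *: p).
Proof. by rewrite -mul_mpolyC; apply: ideal_genMl. Qed.

Lemma ideal_gen_sum A (I : eqType) (s : seq I) (F : I -> P) :
  (forall i, i \in s -> ideal_gen A (F i)) -> ideal_gen A (\sum_(i <- s) F i).
Proof.
elim: s => [|i s IHs] AF; first by rewrite big_nil; apply: ideal_gen0.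
rewrite big_cons; apply: ideal_genD; first by apply: AF; rewrite mem_head.
by apply: IHs => j js; apply: AF; rewrite inE js orbT.
Qed.

Lemma ideal_gen_trans A B p : (forall q, A q -> ideal_gen B q) ->
  ideal_gen A p -> ideal_gen B p.
Proof.
move=> AB; apply: ideal_gen_ind; [exact: ideal_gen0 | exact: ideal_genD |].
by move=> r q /AB; apply: ideal_genMl.
Qed.

Lemma ideal_gen_sub A B p : (forall q, A q -> B q) -> ideal_gen A p -> ideal_gen B p.
Proof. by move=> AB; apply: ideal_gen_trans => q /AB; apply: ideal_gen_gen. Qed.

End IdealGen.

Section Revlex.
Variables (K : fieldType) (n : nat) (y : {perm 'I_n}).
Local Notation P := {mpoly K[n]}.
Local Notation "u <rl v" := (revlex_lt y u v) (at level 70).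
Implicit Types (p q : P) (u v w m : 'X_{1..n}).

Lemma revlex_lt_irr u : ~~ (u <rl u).
Proof. by rewrite /revlex_lt ltnn eqxx; apply/existsP => -[k /andP[]]; rewrite ltnn. Qed.

Lemma revlex_lt_mdeg u v : u <rl v -> (mdeg u <= mdeg v)%N.
Proof. by case/orP=> [/ltnW | /andP[/eqP-> _]]. Qed.

Lemma revlex_lt_trans v u w : u <rl v -> v <rl w -> u <rl w.
Proof.
move=> uv vw; have uvD := revlex_lt_mdeg uv; have vwD := revlex_lt_mdeg vw.
rewrite /revlex_lt; case: (ltngtP (mdeg u) (mdeg w)) => //= [| uwE].
  by rewrite ltnNge (leq_trans uvD vwD).
have vwE : mdeg v = mdeg w by apply/anti_leq; rewrite vwD -uwE uvD.
move: uv vw; rewrite /revlex_lt uwE vwE ltnn eqxx /=.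
move=> /existsP[k1 /andP[lt1 /forallP eq1]] /existsP[k2 /andP[lt2 /forallP eq2]].
apply/existsP; case: (ltngtP k1 k2) => k12.
- exists k2; move: (eq1 k2); rewrite k12 => /eqP<-; rewrite lt2 /=.
  apply/forallP => l; apply/implyP => k2l; move/implyP/(_ k2l): (eq2 l) => /eqP->.
  by move/implyP/(_ (ltn_trans k12 k2l)): (eq1 l).
- exists k1; move: (eq2 k1); rewrite k12 => /eqP->; rewrite lt1 /=.
  apply/forallP => l; apply/implyP => k1l; move/implyP/(_ k1l): (eq1 l) => /eqP<-.
  by move/implyP/(_ (ltn_trans k12 k1l)): (eq2 l).
- move/val_inj: k12 => k12; subst k2.
  exists k1; rewrite (ltn_trans lt2 lt1) /=.
  apply/forallP => l; apply/implyP => k1l; move/implyP/(_ k1l): (eq1 l) => /eqP<-.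
  by move/implyP/(_ k1l): (eq2 l).
Qed.

Lemma revlex_lt_total u v : u != v -> (u <rl v) || (v <rl u).
Proof.
move=> uv; rewrite /revlex_lt; case: (ltngtP (mdeg u) (mdeg v)) => //= _.
have [k0 uvk0] : exists k, u (y k) != v (y k).
  apply/existsP; apply: contraR uv => /existsPn uvE; apply/eqP/mnmP => i.
  by move: (uvE ((y^-1)%g i)); rewrite permKV negbK => /eqP.
case: (@arg_maxnP _ k0 (fun k => u (y k) != v (y k)) val uvk0) => k uvk kmax.
have tailE (l : 'I_n) : (k < l)%N -> u (y l) = v (y l).
  by move=> kl; apply/eqP; apply: contraTT kl => /kmax; rewrite -leqNgt.
case: (ltngtP (u (y k)) (v (y k))) uvk => // uvk _; [apply/orP; right | apply/orP; left];
  apply/existsP; exists k; rewrite uvk /=;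
  by apply/forallP => l; apply/implyP => /tailE ->.
Qed.

Lemma revlex_ltD2l w u v : (w + u)%MM <rl (w + v)%MM = (u <rl v).
Proof.
rewrite /revlex_lt !mdegD ltn_add2l eqn_add2l; congr (_ || (_ && _)).
apply: eq_existsb => k; rewrite !mnmDE ltn_add2l; congr (_ && _).
by apply: eq_forallb => l; rewrite !mnmDE eqn_add2l.
Qed.

Lemma is_lm_uniq p m1 m2 : is_lm y p m1 -> is_lm y p m2 -> m1 = m2.
Proof.
move=> [p1 max1] [p2 max2]; apply/eqP; apply: contraT => m12.
have m21 : m2 != m1 by rewrite eq_sym.
have := revlex_lt_trans (max1 _ p2 m21) (max2 _ p1 m12).
by rewrite (negbTE (revlex_lt_irr _)).
Qed.

Lemma exists_revlex_max (s : seq 'X_{1..n}) : s != [::] ->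
  exists2 m, m \in s & forall m', m' \in s -> m' != m -> m' <rl m.
Proof.
elim: s => [|a s IHs] // _.
have [-> | /IHs[m ms maxm]] := eqVneq s [::].
  by exists a => [|m']; rewrite ?mem_head // inE => /eqP->; rewrite eqxx.
have [-> | am] := eqVneq a m.
  by exists m => [|m' /predU1P[-> /[!eqxx] | /maxm]]; rewrite ?mem_head.
case/orP: (revlex_lt_total am) => [am_lt | ma_lt].
  exists m => [|m' /predU1P[-> // | /maxm //]]; by rewrite inE ms orbT.
exists a => [|m' /predU1P[-> /[!eqxx] // | m's _]]; first by rewrite mem_head.
by have [-> // | m'm] := eqVneq m' m; apply: revlex_lt_trans (maxm _ m's m'm) ma_lt.
Qed.

Lemma exists_lm p : p != 0 -> exists m, is_lm y p m.
Proof.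
by rewrite -msupp_eq0 => /exists_revlex_max[m pm maxm]; exists m.
Qed.

Lemma is_lm_XM p w m : is_lm y p m -> is_lm y ('X_[w] * p) (w + m)%MM.
Proof.
move=> [pm maxm]; split=> [|m']; first by rewrite msuppXM lem_addr addmC addmK.
rewrite msuppXM => /andP[wm' pm'] m'm; rewrite -(submK wm') addmC revlex_ltD2l.
by apply: maxm pm' _; apply: contra_neq m'm => <-; rewrite addmC submK.
Qed.

Lemma is_lm_XMK p w m : is_lm y ('X_[w] * p) m ->
  (w <= m)%MM /\ is_lm y p (m - w)%MM.
Proof.
move=> [wpm maxm]; move: (wpm); rewrite msuppXM => /andP[wm pmw]; split=> //.
split=> // m' pm' m'm; rewrite -(revlex_ltD2l w) [(w + (m - w))%MM]addmC submK //.
apply: maxm; first by rewrite msuppXM lem_addr addmC addmK.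
by apply: contra_neq m'm => <-; rewrite addmC addmK.
Qed.

Lemma monomial_ideal_divisor (M : 'X_{1..n} -> Prop) m0 :
  ideal_gen (fun q : P => exists m, M m /\ q = 'X_[m]) 'X_[m0] ->
  exists m, M m /\ (m <= m0)%MM.
Proof.
set A := fun q => _; pose Q (p : P) := p@_m0 != 0 -> exists m, M m /\ (m <= m0)%MM.
have QI : forall p, ideal_gen A p -> Q p.
  apply: ideal_gen_ind => [|p q Qp Qq | r _ [m [Mm ->]]]; rewrite /Q.
  - by rewrite mcoeff0 eqxx.
  - by rewrite mcoeffD; have [-> | /Qp //] := eqVneq p@_m0 0; rewrite add0r.
  - by rewrite mulrC mcoeffXM; case: ifP => [mm0 _ | _]; [exists m | rewrite eqxx].
by move/QI; apply; rewrite mcoeffX eqxx oner_neq0.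
Qed.

End Revlex.

Section Homogeneous.
Variables (K : fieldType) (n : nat).
Local Notation P := {mpoly K[n]}.
Implicit Types (A : P -> Prop) (p q r : P) (u m : 'X_{1..n}).

Lemma mcoeff_pihomog e p m :
  (pihomog mdeg e p)@_m = if mdeg m == e then p@_m else 0.
Proof.
rewrite pihomogE raddf_sum /= big_mkcond /=.
under eq_bigr do rewrite mcoeffZ mcoeffX.
case: (boolP (m \in msupp p)) => pm.
  rewrite (bigD1_seq m) ?msupp_uniq //= eqxx mulr1 big1 ?addr0 // => a /negbTE am.
  by rewrite am mulr0 if_same.
rewrite big1_seq => [|a /andP[_ pa]]; first by case: ifP => //; rewrite (memN_msupp_eq0 pm).
by case: (eqVneq a m) => [am | _]; [rewrite -am pa in pm | rewrite mulr0 if_same].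
Qed.

Lemma pihomogXM e r u :
  pihomog mdeg e ('X_[u] * r) =
  if (mdeg u <= e)%N then 'X_[u] * pihomog mdeg (e - mdeg u) r else 0.
Proof.
apply/mpolyP => m; rewrite mcoeff_pihomog mcoeffXM.
case: (boolP (u <= m)%MM) => um; last first.
  by rewrite if_same; case: ifP; rewrite ?mcoeff0 // mcoeffXM (negbTE um).
have mdegE : mdeg m = (mdeg u + mdeg (m - u))%N by rewrite -mdegD addmC submK.
case: leqP => [ue | eu]; last by rewrite mcoeff0 mdegE gtn_eqF ?ltn_addr.
by rewrite mcoeffXM um mcoeff_pihomog mdegE -(subnKC ue) eqn_add2l addKn.
Qed.

Lemma ideal_gen_pihomog A p e : (forall q, A q -> q \is homog mdeg) ->
  ideal_gen A p -> ideal_gen A (pihomog mdeg e p).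
Proof.
move=> Ahomog Ap; elim/ideal_gen_ind: Ap e => [e | p1 p2 I1 I2 e | r q Aq e].
- by rewrite pihomog0; apply: ideal_gen0.
- by rewrite pihomogD; apply: ideal_genD.
have /homogP[D /dhomogP qD] := Ahomog q Aq.
rewrite mulrC {1}(mpolyE q) mulr_suml raddf_sum /= big_seq.
under eq_bigr => a qa do rewrite -scalerAl linearZ /= pihomogXM qD //.
case: leqP => [De | _]; last by rewrite big1 => [|a _]; [apply: ideal_gen0 | rewrite scaler0].
rewrite -big_seq; under eq_bigr do rewrite scalerAl.
by rewrite -mulr_suml -mpolyE mulrC; apply/ideal_genMl/ideal_gen_gen.
Qed.

End Homogeneous.

Section Groebner.
Variables (K : fieldType) (n : nat) (y : {perm 'I_n}).
Local Notation P := {mpoly K[n]}.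
Implicit Types (A I Gs : P -> Prop) (p f g : P) (m : 'X_{1..n}).

Lemma groebner_lm_divisor I Gs f m : groebner_basis y I Gs -> I f -> is_lm y f m ->
  exists g mg, [/\ Gs g, is_lm y g mg & (mg <= m)%MM].
Proof.
move=> [_ [_ GsI]] If fm.
have /GsI : init_ideal y I 'X_[m] by apply: ideal_gen_gen; exists f, m.
move/(ideal_gen_sub (B := fun q => exists mg, (exists g, Gs g /\ is_lm y g mg) /\ q = 'X_[mg])).
case/(_ _)/monomial_ideal_divisor => [_ [g [mg [Gg [gmg ->]]]] | mg [[g [Gg gmg]] mgm]].
  by exists mg; split=> //; exists g.
by exists g, mg.
Qed.

Lemma reduced_groebner_homog A Gs g m : (forall q, A q -> q \is homog mdeg) ->
  reduced_groebner_basis y (ideal_gen A) Gs -> Gs g -> is_lm y g m ->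
  g \is (mdeg m).-homog.
Proof.
move=> Ahomog [GB [_ reduced]] Gg gm; have [_ [GsI _]] := GB.
pose g' := g - pihomog mdeg (mdeg m) g.
have g'E m' : g'@_m' = if mdeg m' == mdeg m then 0 else g@_m'.
  by rewrite mcoeffB mcoeff_pihomog; case: ifP; rewrite ?subrr ?subr0.
have [g'0 | g'0] := eqVneq g' 0; first by rewrite homog_piE eq_sym -subr_eq0 -/g' g'0.
have [m2 g'm2] := exists_lm y g'0.
have /andP[m2m gm2] : (mdeg m2 != mdeg m) && (m2 \in msupp g).
  by move: g'm2.1; rewrite !mcoeff_msupp g'E; case: ifP => [_ /[!eqxx] | _ //].
have Ig' : ideal_gen A g' by apply: ideal_genB; [exact: GsI | exact: ideal_gen_pihomog (GsI _ Gg)].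
have [g2 [mg2 [Gg2 g2mg2 mg2m2]]] := groebner_lm_divisor GB Ig' g'm2.
have [g2g | g2g] := eqVneq g2 g.
  move: g2mg2; rewrite g2g => /(is_lm_uniq gm) mE; rewrite -mE in mg2m2.
  have m2m' : m2 != m by apply: contraNneq m2m => ->.
  by rewrite eqn_leq (revlex_lt_mdeg (gm.2 _ gm2 m2m')) lemc_mdeg ?lem_leo in m2m.
case: (reduced g Gg m2 gm2); rewrite -(submK mg2m2) mpolyXD.
by apply/ideal_genMl/ideal_gen_gen; exists g2, mg2; split=> //; split=> //; apply/eqP.
Qed.

End Groebner.

Definition free_parts (K : fieldType) (n : nat) (x : {mpoly K[n]})
    (Gs : {mpoly K[n]} -> Prop) : {mpoly K[n]} -> Prop :=
  fun h => exists g k, [/\ Gs g, g = x ^+ k * h & ~ mdivides (x ^+ k.+1) g].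

Section LastVariable.
Variables (K : fieldType) (n : nat) (e : 'I_n).
Local Notation P := {mpoly K[n]}.
Local Notation x := ('X_e : P).
Implicit Types (Gs : P -> Prop) (g h : P) (m : 'X_{1..n}).

Lemma exists_free_part g : g != 0 ->
  exists k h, g = x ^+ k * h /\ ~ mdivides (x ^+ k.+1) g.
Proof.
move=> g0; apply: NNPP => no_free_part.
have xk_g k : mdivides (x ^+ k) g.
  elim: k => [|k [h gE]]; first by exists g; rewrite mul1r.
  by apply: NNPP => xk1_g; apply: no_free_part; exists k, h.
have [h] := xk_g (msize g); set N := msize g => gE.
have [m hm] : exists m, m \in msupp h.
  have : msupp h != [::] by rewrite msupp_eq0; apply: contraNneq g0 => h0; rewrite gE h0 mulr0.
  by case: (msupp h) => // m s _; exists m; rewrite mem_head.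
have : (U_(e) *+ N + m)%MM \in msupp g.
  by rewrite gE mpolyXn msuppXM lem_addr addmC addmK.
move/msize_mdeg_lt; rewrite mdegD mdegMn mdeg1 mul1n.
by move/(leq_ltn_trans (leq_addr _ _)); rewrite ltnn.
Qed.

Lemma free_part_uniq g k h k' h' :
  g = x ^+ k * h -> ~ mdivides (x ^+ k.+1) g ->
  g = x ^+ k' * h' -> ~ mdivides (x ^+ k'.+1) g -> h = h'.
Proof.
move=> gE gk g'E gk'.
have xk_neq0 i : x ^+ i != 0 by rewrite expf_neq0 ?mpolyX_neq0.
suff kk' : k = k' by apply: (mulfI (xk_neq0 k)); rewrite -gE kk' -g'E.
case: (ltngtP k k') => // [kk' | k'k]; [case: gk | case: gk'].
  by exists (x ^+ (k' - k.+1) * h'); rewrite g'E mulrA -exprD subnKC.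
by exists (x ^+ (k - k'.+1) * h); rewrite gE mulrA -exprD subnKC.
Qed.

Lemma free_parts_finite Gs : (exists s : seq P, forall g, Gs g <-> g \in s) ->
  exists s : seq P, forall h, free_parts x Gs h <-> h \in s.
Proof.
move=> [s Gs_s].
suff [t tE] : exists t : seq P, forall h,
    (exists g k, [/\ g \in s, g = x ^+ k * h & ~ mdivides (x ^+ k.+1) g]) <-> h \in t.
  by exists t => h; rewrite -tE; split=> -[g [k [/Gs_s]]]; exists g, k.
elim: s {Gs_s} => [|g s [t tE]]; first by exists [::] => h; split=> // -[g [k []]].
have [-> | g0] := eqVneq g 0.
  exists t => h; rewrite -tE; split=> -[g' [k [+ g'E g'k]]]; last first.
    by move=> g's; exists g', k; rewrite inE g's orbT.
  case/predU1P => [g'0 | g's]; last by exists g', k.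
  by case: g'k; exists 0; rewrite g'0 mulr0.
have [k0 [h0 [g0E g0k]]] := exists_free_part g0.
exists (h0 :: t) => h; rewrite inE; split.
  move=> [g' [k [/predU1P[-> | g's] g'E g'k]]].
    by rewrite (free_part_uniq g'E g'k g0E g0k) eqxx.
  by apply/orP; right; apply/tE; exists g', k.
case/predU1P => [-> | /tE[g' [k [g's g'E g'k]]]]; first by exists g, k0; rewrite mem_head.
by exists g', k; rewrite inE g's orbT.
Qed.

Variable (y : {perm 'I_n}).
Hypothesis e_last : forall k : 'I_n, (k <= (y^-1)%g e)%N.

Lemma dhomog_lm_mdivides h d mh : h \is d.-homog -> is_lm y h mh -> (0 < mh e)%N ->
  mdivides x h.
Proof.
move=> /dhomogP hd [hmh maxh] mhe; apply: mdividesX => m hm; rewrite lep1mP -lt0n.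
have [-> // | mmh] := eqVneq m mh.
have := maxh m hm mmh; rewrite /revlex_lt (hd m hm) (hd mh hmh) ltnn eqxx /=.
case/existsP => k /andP[mhm /forallP tailE].
case: (ltngtP k ((y^-1)%g e)) => [ke | ek | /val_inj kE].
- by move/implyP/(_ ke)/eqP: (tailE ((y^-1)%g e)); rewrite permKV => <-.
- by have := e_last k; rewrite leqNgt ek.
- by rewrite kE permKV in mhm; apply: leq_ltn_trans mhm.
Qed.

Lemma is_lm_free_part g d k h mg : g \is d.-homog ->
  g = x ^+ k * h -> ~ mdivides (x ^+ k.+1) g -> is_lm y g mg ->
  exists mh, [/\ is_lm y h mh, mh e = 0%N & (mh <= mg)%MM].
Proof.
move=> gd gE gk gmg; move: gmg gd; rewrite gE mpolyXn => /is_lm_XMK[kmg hmh] /dhomogXMK hd.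
exists (mg - U_(e) *+ k)%MM; split=> //; last exact: lem_subr.
apply/eqP; apply: contraT; rewrite -lt0n => /(dhomog_lm_mdivides hd hmh)[q hE].
by case: gk; exists q; rewrite gE hE exprSr mulrA.
Qed.

Lemma groebner_basis_free_parts I J Gs :
  groebner_basis y I Gs -> (forall g, Gs g -> g \is homog mdeg) ->
  (forall p, I p -> J p) -> (forall f, J f -> exists N, I (x ^+ N * f)) ->
  (forall k h, J (x ^+ k * h) -> J h) ->
  groebner_basis y J (free_parts x Gs).
Proof.
move=> GB Ghomog IJ Jsat Jcolon; have [Gsfin [GsI _]] := GB.
have freeJ h : free_parts x Gs h -> J h.
  by move=> [g [k [Gg gE _]]]; apply: (Jcolon k); rewrite -gE; apply/IJ/GsI.
split; [exact: free_parts_finite | split=> // q; split].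
  by apply: ideal_gen_sub => _ [h [mh [fh [hmh ->]]]]; exists h, mh; split=> //; apply: freeJ.
apply: ideal_gen_trans => _ [f [m [Jf [fm ->]]]].
have [N IfN] := Jsat f Jf; rewrite mpolyXn in IfN.
have [g [mg [Gg gmg mgm]]] := groebner_lm_divisor GB IfN (is_lm_XM _ fm).
have g0 : g != 0 by apply: contraTneq gmg.1 => ->; rewrite msupp0.
have [k [h [gE gk]]] := exists_free_part g0.
have /homogP[d gd] := Ghomog g Gg.
have [mh [hmh mhe mhmg]] := is_lm_free_part gd gE gk gmg.
have mhm : (mh <= m)%MM.
  apply/mnm_lepP => i; have [-> | ie] := eqVneq i e; first by rewrite mhe.
  move/mnm_lepP/(_ i): (lepm_trans mhmg mgm); rewrite mnmDE mulmnE mnm1E eq_sym.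
  by rewrite (negbTE ie).
rewrite -(submK mhm) mpolyXD; apply/ideal_genMl/ideal_gen_gen.
by exists h, mh; split=> //; exists g, k.
Qed.

End LastVariable.

HB.instance Definition _ (K : fieldType) (d : nat) (E : rel 'I_d) :=
  GRing.RMorphism.copy (pi_map K E)
    (mmap (@mpolyC _ K) (fun i => pi_img K E (enum_val i))).

Section Graph.
Variables (K : fieldType) (d : nat) (E : rel 'I_d).
Hypothesis Eirr : irreflexive E.
Local Notation P := (RG K E).
Local Notation n := (nS E).
Local Notation x_ := (xS K E).
Local Notation x0 := (xS K E (stab_empty E)).
Local Notation wd := (widen_ord (leqnSn d)).

Lemma stable_subset (A B : {set 'I_d}) : A \subset B -> stable E B -> stable E A.
Proof.
move=> /subsetP AB /forall_inP Bst; apply/forall_inP => i Ai; apply/forall_inP => j Aj.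
by move/forall_inP: (Bst i (AB i Ai)); apply; apply: AB.
Qed.

Lemma stable_set1 j : stable E [set j].
Proof. by apply/forall_inP => i /set1P->; apply/forall_inP => k /set1P->; rewrite Eirr. Qed.

Definition stab1 j : stabT E := exist _ [set j] (stable_set1 j).

Lemma L_G_stable_split (S : stabT E) :
  L_G K E (x0 ^+ #|val S| * x_ S - x0 * \prod_(j in val S) x_ (stab1 j)).
Proof.
have [c] := ubnP #|val S|; elim: c S => // c IHc S; rewrite ltnS => Sc.
have [S1 | S2] := leqP #|val S| 1.
  have [S0 | [i iS]] := set_0Vmem (val S).
    have -> : S = stab_empty E by apply: val_inj.
    by rewrite /= cards0 big_set0 expr0 mul1r mulr1 subrr; apply: ideal_gen0.
  have -> : S = stab1 i by apply/val_inj/eqP; rewrite /= eq_sym eqEcard sub1set iS cards1.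
  by rewrite /= big_set1 cards1 subrr; apply: ideal_gen0.
have [i iS] : exists i, i \in val S by apply/card_gt0P; apply: ltnW.
pose S' : stabT E := exist _ (val S :\ i) (stable_subset (subsetDl _ _) (valP S)).
have S'S : #|val S| = #|val S'|.+1 by rewrite (cardsD1 i) iS.
have S'c : (#|val S'| < c)%N by rewrite -S'S.
have gen : L_G K E (x_ S' * x_ (stab1 i) - x_ S * x0).
  by apply: ideal_gen_gen; exists S, S', (stab1 i), i.
rewrite S'S (big_setD1 i iS) /=.
have -> : x0 ^+ #|val S'|.+1 * x_ S - x0 * (x_ (stab1 i) * \prod_(j in val S') x_ (stab1 j)) =
    - x0 ^+ #|val S'| * (x_ S' * x_ (stab1 i) - x_ S * x0) +
    x_ (stab1 i) * (x0 ^+ #|val S'| * x_ S' - x0 * \prod_(j in val S') x_ (stab1 j)).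
  by rewrite exprS; ring.
by apply: ideal_genD; apply: ideal_genMl; last exact: IHc.
Qed.

Definition pi_exp (i : 'I_n) : 'X_{1..d.+1} :=
  (U_(ord_max) + \sum_(j in val (enum_val i)) U_(wd j))%MM.
Definition pi_mexp (a : 'X_{1..n}) : 'X_{1..d.+1} := (\sum_(i < n) pi_exp i *+ a i)%MM.
Definition t_deg (v : 'X_{1..d.+1}) : nat := \sum_(j < d) v (wd j).
Definition singleton_mexp (v : 'X_{1..d.+1}) : 'X_{1..n} :=
  (\sum_(j < d) U_(enum_rank (stab1 j)) *+ v (wd j))%MM.

Lemma pi_mapX a : pi_map K E 'X_[a] = 'X_[pi_mexp a].
Proof.
rewrite /pi_map mmapX /mmap1 /pi_mexp -mprodXnE; apply: eq_bigr => i _.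
by rewrite /pi_img /pi_exp mpolyXD mprodXE.
Qed.

Lemma pi_mapE f : pi_map K E f = \sum_(a <- msupp f) f@_a *: 'X_[pi_mexp a].
Proof.
rewrite {1}(mpolyE f) raddf_sum; apply: eq_bigr => a _.
by rewrite /= -mul_mpolyC rmorphM /= pi_mapX /pi_map mmapC mul_mpolyC.
Qed.

Lemma pi_mexp0 : pi_mexp 0%MM = 0%MM.
Proof. by apply/mnmP => k; rewrite mnm_sumE mnm0E big1 // => i _; rewrite mnm0E mulmnE muln0. Qed.

Lemma pi_mexpD a b : pi_mexp (a + b)%MM = (pi_mexp a + pi_mexp b)%MM.
Proof.
apply/mnmP => k; rewrite mnmDE !mnm_sumE -big_split /=.
by apply: eq_bigr => i _; rewrite !mulmnE mnmDE mulnDr.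
Qed.

Lemma pi_mexpU i : pi_mexp U_(i)%MM = pi_exp i.
Proof.
apply/mnmP => k; rewrite mnm_sumE (bigD1 i) //= mulmnE mnm1E eqxx muln1 big1 ?addn0 //.
by move=> j /negbTE ji; rewrite mulmnE mnm1E eq_sym ji muln0.
Qed.

Lemma t_deg0 : t_deg 0%MM = 0%N.
Proof. by rewrite /t_deg big1 // => j _; rewrite mnm0E. Qed.

Lemma t_degD u v : t_deg (u + v)%MM = (t_deg u + t_deg v)%N.
Proof. by rewrite /t_deg -big_split; apply: eq_bigr => j _; rewrite mnmDE. Qed.

Lemma singleton_mexp0 : singleton_mexp 0%MM = 0%MM.
Proof. by apply/mnmP => k; rewrite mnm_sumE mnm0E big1 // => j _; rewrite mnm0E mulmnE muln0. Qed.

Lemma singleton_mexpD u v :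
  singleton_mexp (u + v)%MM = (singleton_mexp u + singleton_mexp v)%MM.
Proof.
apply/mnmP => k; rewrite mnmDE !mnm_sumE -big_split /=.
by apply: eq_bigr => j _; rewrite !mulmnE mnmDE mulnDr.
Qed.

Lemma pi_exp_max i : pi_exp i ord_max = 1%N.
Proof.
rewrite mnmDE mnm1E eqxx mnm_sumE big1 // => j _.
by rewrite mnm1E; apply/eqP; rewrite eqb0 -val_eqE /= neq_ltn ltn_ord.
Qed.

Lemma pi_exp_wd i j : pi_exp i (wd j) = (j \in val (enum_val i)).
Proof.
rewrite mnmDE mnm1E mnm_sumE -val_eqE /= gtn_eqF // add0n.
under eq_bigr do rewrite mnm1E -val_eqE /= val_eqE.
case: (boolP (j \in _)) => jS; last by rewrite big1 // => k kS; case: eqP jS => // <-; rewrite kS.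
by rewrite (bigD1 j) //= eqxx big1 // => k /andP[_ /negbTE->].
Qed.

Lemma t_deg_pi_exp i : t_deg (pi_exp i) = #|val (enum_val i)|.
Proof.
rewrite -sum1_card big_mkcond; apply: eq_bigr => j _.
by rewrite pi_exp_wd; case: (_ \in _).
Qed.

Lemma singleton_mexp_pi_exp i :
  'X_[singleton_mexp (pi_exp i)] = \prod_(j in val (enum_val i)) x_ (stab1 j).
Proof.
rewrite mprodXE big_mkcond; congr 'X_[_]; apply: eq_bigr => j _.
by rewrite pi_exp_wd; case: (_ \in _).
Qed.

Lemma L_G_normal_mono a :
  L_G K E (x0 ^+ t_deg (pi_mexp a) * 'X_[a] -
           x0 ^+ pi_mexp a ord_max * 'X_[singleton_mexp (pi_mexp a)]).
Proof.
elim/mnm_ind: a => [|i b IHb].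
  by rewrite pi_mexp0 t_deg0 singleton_mexp0 mnm0E mpolyX0 subrr; apply: ideal_gen0.
rewrite pi_mexpD pi_mexpU t_degD mnmDE singleton_mexpD t_deg_pi_exp pi_exp_max.
rewrite !mpolyXD singleton_mexp_pi_exp !exprD.
have := L_G_stable_split (enum_val i); rewrite /xS enum_valK.
set A1 := x0 ^+ _; set B1 := x0 * _ => splitS.
set A2 := x0 ^+ t_deg _; set B2 := x0 ^+ _ ord_max in IHb *.
have -> : A1 * A2 * ('X_i * 'X_[b]) - x0 ^+ 1 * B2 *
    (\prod_(j in val (enum_val i)) x_ (stab1 j) * 'X_[singleton_mexp (pi_mexp b)]) =
  (A2 * 'X_[b]) * (A1 * 'X_i - B1) + B1 * (A2 * 'X_[b] - B2 * 'X_[singleton_mexp (pi_mexp b)]).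
  by rewrite /B1 /xS; ring.
by apply: ideal_genD; apply: ideal_genMl.
Qed.

Lemma t_deg_pi_mexp_le a : (t_deg (pi_mexp a) <= d * mdeg a)%N.
Proof.
elim/mnm_ind: a => [|i b IHb]; first by rewrite pi_mexp0 t_deg0.
rewrite pi_mexpD pi_mexpU t_degD t_deg_pi_exp mdegD mdeg1 mulnDr muln1 leq_add //.
by rewrite -[X in (_ <= X)%N]card_ord max_card.
Qed.

Lemma L_G_saturation f : I_G K E f -> exists N, L_G K E (x0 ^+ N * f).
Proof.
rewrite /I_G pi_mapE => f_rel; pose N := (d * msize f)%N; exists N.
pose F v : P := x0 ^+ (N - t_deg v + v ord_max) * 'X_[singleton_mexp v].
have -> : x0 ^+ N * f = \sum_(a <- msupp f) f@_a *: (x0 ^+ N * 'X_[a] - F (pi_mexp a))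
    + \sum_(a <- msupp f) f@_a *: F (pi_mexp a).
  rewrite -big_split /=; under eq_bigr do rewrite -scalerDr subrK.
  by rewrite {1}(mpolyE f) mulr_sumr; apply: eq_bigr => a _; rewrite scalerAr.
rewrite (sum_mcoeffZ_comp_eq0 F f_rel) addr0; apply: ideal_gen_sum => a fa.
have tN : (t_deg (pi_mexp a) <= N)%N.
  by rewrite (leq_trans (t_deg_pi_mexp_le a)) // leq_mul2l ltnW ?orbT ?msize_mdeg_lt.
have -> : x0 ^+ N * 'X_[a] - F (pi_mexp a) = x0 ^+ (N - t_deg (pi_mexp a)) *
    (x0 ^+ t_deg (pi_mexp a) * 'X_[a] -
     x0 ^+ pi_mexp a ord_max * 'X_[singleton_mexp (pi_mexp a)]).
  by rewrite /F mulrBr !mulrA -!exprD subnK.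
by apply/ideal_genZ/ideal_genMl/L_G_normal_mono.
Qed.

Lemma ideal_gen_I_G (A : P -> Prop) p :
  (forall q, A q -> I_G K E q) -> ideal_gen A p -> I_G K E p.
Proof.
move=> AI; apply: ideal_gen_ind => [|p1 p2 | r q /AI]; rewrite /I_G ?rmorph0 //.
  by rewrite rmorphD /= => -> ->; rewrite addr0.
by rewrite rmorphM /= => ->; rewrite mulr0.
Qed.

Lemma I_G_XMK u p : I_G K E ('X_[u] * p) -> I_G K E p.
Proof.
rewrite /I_G rmorphM /= pi_mapX => /eqP.
by rewrite mulf_eq0 (negbTE (mpolyX_neq0 _ _)) => /eqP.
Qed.

Lemma pi_map_xS S : pi_map K E (x_ S) = pi_img K E S.
Proof. by rewrite pi_mapX pi_mexpU /pi_img /pi_exp mpolyXD mprodXE enum_rankK. Qed.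

Lemma J_gen_I_G S1 S2 S3 S4 :
  val S1 :&: val S2 = set0 -> val S3 :&: val S4 = set0 ->
  val S1 :|: val S2 = val S3 :|: val S4 ->
  I_G K E (x_ S1 * x_ S2 - x_ S3 * x_ S4).
Proof.
move=> S12 S34 S1234; pose t j : {mpoly K[d.+1]} := 'X_(wd j).
have prodU (A B : {set 'I_d}) : A :&: B = set0 ->
    \prod_(j in A :|: B) t j = \prod_(j in A) t j * \prod_(j in B) t j.
  by move=> AB; rewrite -bigU -?setI_eq0 ?AB //; apply: eq_bigl => j; rewrite !inE.
rewrite /I_G rmorphB /= !rmorphM /= !pi_map_xS /pi_img.
by rewrite mulrACA [X in _ - X]mulrACA -!prodU // S1234 subrr.
Qed.

Lemma J_gen_homog S1 S2 S3 S4 : x_ S1 * x_ S2 - x_ S3 * x_ S4 \is 2.-homog.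
Proof. by rewrite rpredB // -mpolyXD dhomogX /= mdegD !mdeg1. Qed.

Lemma L_gen_J_gen q :
  (exists (S S' Si : stabT E) (i : 'I_d),
    [/\ i \in val S, (2 <= #|val S|)%N, val S' = val S :\ i, val Si = [set i] &
        q = x_ S' * x_ Si - x_ S * x0]) ->
  exists S1 S2 S3 S4 : stabT E,
    [/\ val S1 :&: val S2 = set0, val S3 :&: val S4 = set0,
        val S1 :|: val S2 = val S3 :|: val S4 & q = x_ S1 * x_ S2 - x_ S3 * x_ S4].
Proof.
move=> [S [S' [Si [i [iS _ S'E SiE ->]]]]]; exists S', Si, S, (stab_empty E).
split=> //; rewrite ?S'E ?SiE /= ?setI0 //; last by rewrite setU0 setUC setD1K.
by apply/setP => j; rewrite !inE andbC; case: eqP.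
Qed.

Lemma quadratic_generators (I : P -> Prop) :
  I = I_G2 K E \/ I = J_G K E \/ I = L_G K E ->
  exists A : P -> Prop, [/\ I = ideal_gen A, forall q, A q -> q \is 2.-homog,
    forall q, A q -> I_G K E q & forall p, L_G K E p -> I p].
Proof.
have LJ p : L_G K E p -> J_G K E p by apply: ideal_gen_sub => q /L_gen_J_gen.
have JI2 p : J_G K E p -> I_G2 K E p.
  apply: ideal_gen_sub => _ [S1 [S2 [S3 [S4 [S12 S34 S1234 ->]]]]].
  by split; [apply: J_gen_I_G | rewrite -dhomogE J_gen_homog].
case=> [-> | [-> | ->]]; (eexists; split; first reflexivity).
- by move=> q [_]; rewrite dhomogE.
- by move=> q [].
- by move=> p /LJ /JI2.
- by move=> _ [S1 [S2 [S3 [S4 [_ _ _ ->]]]]]; apply: J_gen_homog.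
- by move=> _ [S1 [S2 [S3 [S4 [S12 S34 S1234 ->]]]]]; apply: J_gen_I_G.
- exact: LJ.
- by move=> q /L_gen_J_gen[S1 [S2 [S3 [S4 [_ _ _ ->]]]]]; apply: J_gen_homog.
- by move=> q /L_gen_J_gen[S1 [S2 [S3 [S4 [S12 S34 S1234 ->]]]]]; apply: J_gen_I_G.
- by [].
Qed.

End Graph.

Theorem proposition4p2 (K : fieldType) (d : nat) (E : rel 'I_d)
  (Esym : ssrbool.symmetric E) (Eirr : irreflexive E)
  (I : RG K E -> Prop)
  (HI : I = I_G2 K E \/ I = J_G K E \/ I = L_G K E)
  (y : {perm 'I_(nS E)})
  (Hy : forall S : stabT E,
          ((y^-1)%g (enum_rank S) <= (y^-1)%g (enum_rank (stab_empty E)))%N)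
  (Gs : RG K E -> Prop)
  (HGs : reduced_groebner_basis y I Gs) :
  groebner_basis y (I_G K E)
    (fun h => exists (g : RG K E) (k : nat),
       [/\ Gs g, g = xS K E (stab_empty E) ^+ k * h &
           ~ mdivides (xS K E (stab_empty E) ^+ k.+1) g]).
Proof.
have [A [IA Ahomog AI LI]] := quadratic_generators HI; subst I.
have empty_last (k : 'I_(nS E)) : (k <= (y^-1)%g (enum_rank (stab_empty E)))%N.
  by have := Hy (enum_val (y k)); rewrite enum_valK permK.
apply: (groebner_basis_free_parts empty_last HGs.1).
- move=> g Gg; have [m [gm _]] := HGs.2.1 g Gg.
  by apply/homogE/(reduced_groebner_homog _ HGs Gg gm) => q /Ahomog /homogE.
- by move=> p; apply: ideal_gen_I_G.
- by move=> f /(L_G_saturation Eirr)[N /LI]; exists N.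
- by move=> k h; rewrite mpolyXn; apply: I_G_XMK.
Qed.
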